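(* Let $(\sigma,f)$ and $(\tau,g)$ be generalized equivariant maps from $K\ltimes Y$ to $G\ltimes X$, namely $K\ltimes Y\xleftarrow{\sigma}K'\ltimes Y'\xrightarrow{f}G\ltimes X$ and $K\ltimes Y\xleftarrow{\tau}K''\ltimes Y''\xrightarrow{g}G\ltimes X$. If $(\sigma,f)\Rightarrow(\tau,g)$, then $(\sigma,f)$ and $(\tau,g)$ are homotopic.
   Context: Translation groupoids $G\ltimes X$ have objects $X$, arrows $G\times X$, and arrows $(g,x):x\to gx$; all groups are discrete and act properly. $X^I$ is the space of continuous paths $[0,1]\to X$ with the compact-open topology and pointwise $G$-action. For $i\in\{0,1\}$, $\mathrm{ev}_i:G\ltimes X^I\to G\ltimes X$ is the equivariant map $(g,\alpha)\mapsto(g,\alpha(i))$. A natural transformation $\phi\sim\psi$ between strict morphisms is a continuous $T:K_0\to G_1$ with $T(x):\phi(x)\to\psi(x)$ natural in arrows. An essential equivalence is a strict morphism $\epsilon:\mathcal K\to\mathcal G$ satisfying two conditions. (i) The map $G_1\times^t_{G_0}K_0\to G_0$, $(g,k)\mapsto s(g)$, is an open surjection. (ii) $K_1$ is the pullback of $(s,t):G_1\to G_0\times G_0$ along $\epsilon\times\epsilon$. A generalized equivariant map $\mathcal K\xleftarrow{\epsilon}\mathcal J\xrightarrow{\phi}\mathcal G$ is a span of equivariant maps of translation groupoids with $\epsilon$ an essential equivalence. Two such, $(\epsilon,\phi)$ and $(\epsilon',\phi')$, are $2$-isomorphic, written $(\epsilon,\phi)\Rightarrow(\epsilon',\phi')$,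 if there are a translation groupoid $\mathcal L$ and equivariant essential equivalences $u:\mathcal L\to\mathcal J$, $v:\mathcal L\to\mathcal J'$ with $\epsilon u\sim\epsilon'v$ and $\phi u\sim\phi'v$. Homotopy: generalized maps $(\sigma,f)$ and $(\tau,g)$ from $K\ltimes Y$ to $G\ltimes X$ are homotopic if there is a generalized equivariant map $K\ltimes Y\xleftarrow{\epsilon}\tilde K\ltimes\tilde Y\xrightarrow{H}G\ltimes X^I$ with $(\sigma,f)\Rightarrow(\epsilon,\mathrm{ev}_0\circ H)$ and $(\tau,g)\Rightarrow(\epsilon,\mathrm{ev}_1\circ H)$. *)

From Stdlib Require Import Reals List FunctionalExtensionality PropExtensionality.
Set Implicit Arguments.
Unset Strict Implicit.

Record space := Space {
  pt :> Type;
  is_open : (pt -> Prop) -> Prop;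
  open_full : is_open (fun _ => True);
  open_inter : forall A B, is_open A -> is_open B -> is_open (fun x => A x /\ B x);
  open_union : forall F : (pt -> Prop) -> Prop,
      (forall A, F A -> is_open A) -> is_open (fun x => exists A, F A /\ A x) }.
Arguments is_open {s} _.

Definition continuous (A B : space) (f : A -> B) : Prop :=
  forall U : B -> Prop, is_open U -> is_open (fun x => U (f x)).

Definition open_map (A B : space) (f : A -> B) : Prop :=
  forall U : A -> Prop, is_open U -> is_open (fun b => exists a, U a /\ f a = b).

Definition surjective (A B : Type) (f : A -> B) := forall b, exists a, f a = b.
Definition injective (A B : Type) (f : A -> B) := forall a a', f a = f a' -> a = a'.

Definition compact (X : space) (C : X -> Prop) : Prop :=
  forall F : (X -> Prop) -> Prop,
    (forall A, F A -> is_open A) ->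
    (forall x, C x -> exists A, F A /\ A x) ->
    exists l : list (X -> Prop), Forall F l /\ (forall x, C x -> Exists (fun A => A x) l).

Definition proper_map (A B : space) (f : A -> B) : Prop :=
  continuous f /\ forall C : B -> Prop, compact C -> compact (fun a => C (f a)).

Definition homeo_onto (A B : space) (f : A -> B) (P : B -> Prop) : Prop :=
  continuous f /\ injective f /\ (forall b, P b <-> exists a, f a = b) /\
  (forall U : A -> Prop, is_open U ->
     exists W : B -> Prop, is_open W /\ forall a, U a <-> W (f a)).

Definition gen_open (T : Type) (B : (T -> Prop) -> Prop) (A : T -> Prop) : Prop :=
  forall x, A x -> exists l : list (T -> Prop),
    Forall B l /\ Forall (fun b => b x) l /\
    (forall y, Forall (fun b => b y) l -> A y).

Lemma gen_open_full T (B : (T -> Prop) -> Prop) : gen_open B (fun _ => True).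
Proof. intros x _; exists nil; split; [|split]; auto. Qed.

Lemma gen_open_inter T (B : (T -> Prop) -> Prop) A1 A2 :
  gen_open B A1 -> gen_open B A2 -> gen_open B (fun x => A1 x /\ A2 x).
Proof.
  intros H1 H2 x [a1 a2].
  destruct (H1 x a1) as [l1 [b1 [c1 d1]]]; destruct (H2 x a2) as [l2 [b2 [c2 d2]]].
  exists (l1 ++ l2); split; [|split].
  - apply Forall_app; split; assumption.
  - apply Forall_app; split; assumption.
  - intros z Hz; apply Forall_app in Hz; destruct Hz; auto.
Qed.

Lemma gen_open_union T (B : (T -> Prop) -> Prop) (F : (T -> Prop) -> Prop) :
  (forall A, F A -> gen_open B A) -> gen_open B (fun x => exists A, F A /\ A x).
Proof.
  intros HF x [A [FA Ax]]. destruct (HF A FA x Ax) as [l [b [c d]]].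
  exists l; split; [|split]; auto. intros z Hz; exists A; auto.
Qed.

Definition gen_space (T : Type) (B : (T -> Prop) -> Prop) : space :=
  @Space T (gen_open B) (gen_open_full B) (@gen_open_inter T B) (@gen_open_union T B).

Definition discrete_space (T : Type) : space :=
  @Space T (fun _ => True) I (fun _ _ _ _ => I) (fun _ _ => I).

Definition prod_space (X Y : space) : space :=
  gen_space (fun A : (X * Y)%type -> Prop =>
    (exists U : X -> Prop, is_open U /\ forall p, A p <-> U (fst p)) \/
    (exists V : Y -> Prop, is_open V /\ forall p, A p <-> V (snd p))).

Definition sub_space (X : space) (P : X -> Prop) : space :=
  gen_space (fun A : {x : X | P x} -> Prop =>
    exists U : X -> Prop, is_open U /\ forall p, A p <-> U (proj1_sig p)).

Definition R_space : space :=
  gen_space (fun A : R -> Prop => exists a b : R, forall y, A y <-> (a < y < b)%R).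
Definition I_space : space := sub_space (X := R_space) (fun t : R => (0 <= t <= 1)%R).
Definition i0 : I_space := exist _ 0%R (conj (Rle_refl 0) Rle_0_1).
Definition i1 : I_space := exist _ 1%R (conj Rle_0_1 (Rle_refl 1)).

Definition path_space (X : space) : space :=
  gen_space (fun A : {a : I_space -> X | continuous a} -> Prop =>
    exists (C : I_space -> Prop) (U : X -> Prop),
      compact C /\ is_open U /\
      forall a, A a <-> (forall t, C t -> U (proj1_sig a t))).

Lemma continuous_comp (A B C : space) (f : A -> B) (g : B -> C) :
  continuous f -> continuous g -> continuous (fun x => g (f x)).
Proof. intros hf hg U hU. exact (hf _ (hg U hU)). Qed.

Lemma open_ext (X : space) (A A' : X -> Prop) :
  (forall x, A x <-> A' x) -> is_open A -> is_open A'.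
Proof.
  intros h hA. replace A' with A; auto.
  apply functional_extensionality; intro x; apply propositional_extensionality; auto.
Qed.

Lemma open_nbhd (X : space) (A : X -> Prop) :
  (forall x, A x -> exists U, is_open U /\ U x /\ forall y, U y -> A y) -> is_open A.
Proof.
  intros h.
  apply (@open_ext X (fun x => exists U, (is_open U /\ forall y, U y -> A y) /\ U x)).
  - intro x; split.
    + intros [U [[_ hU] Ux]]; auto.
    + intro Ax; destruct (h x Ax) as [U [oU [Ux hU]]]; eauto.
  - apply open_union; intros U [oU _]; exact oU.
Qed.

Lemma open_list (X : space) (l : list (X -> Prop)) :
  Forall (@is_open X) l -> is_open (fun y => Forall (fun b => b y) l).
Proof.
  induction l as [|b l IH]; intro h.
  - apply (@open_ext X (fun _ => True)); [intro; split; auto|apply open_full].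
  - inversion h; subst.
    apply (@open_ext X (fun y => b y /\ Forall (fun b => b y) l)).
    + intro y; split; [intros [u v]; constructor; auto| intro H; inversion H; auto].
    + apply open_inter; auto.
Qed.

Lemma continuous_gen (X : space) (T : Type) (B : (T -> Prop) -> Prop) (f : X -> T) :
  (forall b, B b -> is_open (fun x => b (f x))) -> @continuous X (gen_space B) f.
Proof.
  intros hB U hU. apply open_nbhd. intros x Ux.
  destruct (hU (f x) Ux) as [l [bl [xl hl]]].
  exists (fun y => Forall (fun b => b y) (map (fun b y => b (f y)) l)).
  split; [|split].
  - apply open_list. apply Forall_map. eapply Forall_impl; [|exact bl]. auto.
  - apply Forall_map; exact xl.
  - intros y Hy; apply hl; apply Forall_map in Hy; exact Hy.
Qed.

Lemma gen_open_basic (T : Type) (B : (T -> Prop) -> Prop) b : B b -> gen_open B b.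
Proof.
  intros hb x bx; exists (b :: nil); split; [|split]; auto.
  intros z Hz; inversion Hz; auto.
Qed.

Record group := Group {
  gcar :> Type;
  gmul : gcar -> gcar -> gcar;
  gone : gcar;
  ginv : gcar -> gcar;
  gmulA : forall a b c, gmul a (gmul b c) = gmul (gmul a b) c;
  gmul1l : forall a, gmul gone a = a;
  gmul1r : forall a, gmul a gone = a;
  gmulVl : forall a, gmul (ginv a) a = gone;
  gmulVr : forall a, gmul a (ginv a) = gone }.
Arguments gmul {g} _ _.
Arguments gone {g}.

(* A G-space: a space with an action by homeomorphisms; since G is discrete,
   continuity of G x X -> X amounts to continuity of each x |-> g x.
   The action laws and properness are in [gaction_ok]. *)
Record gspace (G : group) := GSpace {
  gsp :> space;
  act : G -> gsp -> gsp;
  act_cont : forall g, continuous (act g) }.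
Arguments act {G} _ _ _.
Arguments act_cont {G} _ _ _ _.

Definition arr_space (G : group) (X : gspace G) : space :=
  prod_space (discrete_space G) X.

Definition proper_action (G : group) (X : gspace G) : Prop :=
  @proper_map (arr_space X) (prod_space X X) (fun p => (act X (fst p) (snd p), snd p)).

Definition gaction_ok (G : group) (X : gspace G) : Prop :=
  (forall x, act X gone x = x) /\
  (forall g h x, act X (gmul g h) x = act X g (act X h x)) /\
  proper_action X.

(* structure maps of the translation groupoid G ⋉ X; arrow (g,x) : x -> g x *)
Definition src (G : group) (X : gspace G) (a : arr_space X) : X := snd a.
Definition tgt (G : group) (X : gspace G) (a : arr_space X) : X := act X (fst a) (snd a).
(* composition  b o a  (for a : x -> y, b : y -> z) *)
Definition acomp (G : group) (X : gspace G) (b a : arr_space X) : arr_space X :=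
  (gmul (fst b) (fst a), snd a).

Definition pact (G : group) (X : gspace G) (g : G) (a : path_space X) : path_space X :=
  exist _ (fun t => act X g (proj1_sig a t))
          (continuous_comp (proj2_sig a) (act_cont X g)).

Arguments pact {G} X g a.

Lemma pact_cont (G : group) (X : gspace G) (g : G) : continuous (pact X g).
Proof.
  apply continuous_gen. intros b [C [U [cC [oU hb]]]].
  apply gen_open_basic. exists C, (fun x => U (act X g x)).
  split; [exact cC|split; [exact (act_cont X g U oU)|]].
  intro a; simpl; rewrite hb; simpl; tauto.
Qed.

Definition path_gspace (G : group) (X : gspace G) : gspace G :=
  @GSpace G (path_space X) (pact X) (@pact_cont G X).

(* A map K ⋉ Y -> G ⋉ X given by a homomorphism and an equivariant map;
   on arrows (k,y) |-> (ehom k, emor y). *)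
Record emap (K : group) (Y : gspace K) (G : group) (X : gspace G) := EMap {
  ehom : K -> G;
  emor : Y -> X }.
Arguments ehom {K Y G X} _ _.
Arguments emor {K Y G X} _ _.

Definition equivariant K (Y : gspace K) G (X : gspace G) (e : emap Y X) : Prop :=
  (forall a b, ehom e (gmul a b) = gmul (ehom e a) (ehom e b)) /\
  continuous (emor e) /\
  (forall k y, emor e (act Y k y) = act X (ehom e k) (emor e y)).

Definition arrmap K (Y : gspace K) G (X : gspace G) (e : emap Y X)
  (a : arr_space Y) : arr_space X := (ehom e (fst a), emor e (snd a)).

Definition ecomp K (Y : gspace K) G (X : gspace G) H (Z : gspace H)
  (e2 : emap Y Z) (e1 : emap X Y) : emap X Z :=
  @EMap G X H Z (fun g => ehom e2 (ehom e1 g)) (fun x => emor e2 (emor e1 x)).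

Definition ev (G : group) (X : gspace G) (i : I_space) : emap (path_gspace X) X :=
  @EMap G (path_gspace X) G X (fun g => g) (fun a => proj1_sig a i).

Definition nat_trans K (Y : gspace K) G (X : gspace G) (phi psi : emap Y X) : Prop :=
  exists T : Y -> arr_space X,
    @continuous Y (arr_space X) T /\
    (forall y, src (T y) = emor phi y /\ tgt (T y) = emor psi y) /\
    (forall k y, acomp (T (act Y k y)) (arrmap phi (k, y)) =
                 acomp (arrmap psi (k, y)) (T y)).

Definition ess_equiv K (Y : gspace K) G (X : gspace G) (eps : emap Y X) : Prop :=
  (* (i) G_1 x^t_{G_0} K_0 -> G_0, (g,k) |-> s(g), is an open surjection *)
  (let P := @sub_space (prod_space (arr_space X) Y)
                       (fun p => tgt (fst p) = emor eps (snd p)) in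
   let m := fun p : P => src (fst (proj1_sig p)) in
   @open_map P X m /\ surjective m) /\
  (* (ii) K_1 is the pullback of (s,t) : G_1 -> G_0 x G_0 along eps x eps *)
  @homeo_onto (arr_space Y) (prod_space (arr_space X) (prod_space Y Y))
    (fun a => (arrmap eps a, (src a, tgt a)))
    (fun q => src (fst q) = emor eps (fst (snd q)) /\
              tgt (fst q) = emor eps (snd (snd q))).

Definition gen_map K (Y : gspace K) G (X : gspace G) J (Z : gspace J)
  (eps : emap Z Y) (phi : emap Z X) : Prop :=
  gaction_ok Z /\ equivariant eps /\ equivariant phi /\ ess_equiv eps.

Definition two_iso K (Y : gspace K) G (X : gspace G) J (Z : gspace J) J' (Z' : gspace J')
  (eps : emap Z Y) (phi : emap Z X) (eps' : emap Z' Y) (phi' : emap Z' X) : Prop :=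
  exists (L : group) (W : gspace L) (u : emap W Z) (v : emap W Z'),
    gaction_ok W /\ equivariant u /\ equivariant v /\ ess_equiv u /\ ess_equiv v /\
    nat_trans (ecomp eps u) (ecomp eps' v) /\
    nat_trans (ecomp phi u) (ecomp phi' v).

Definition homotopic K (Y : gspace K) G (X : gspace G) J (Z : gspace J) J' (Z' : gspace J')
  (sigma : emap Z Y) (f : emap Z X) (tau : emap Z' Y) (g : emap Z' X) : Prop :=
  exists (Kt : group) (Yt : gspace Kt) (eps : emap Yt Y) (H : emap Yt (path_gspace X)),
    gen_map eps H /\
    two_iso sigma f eps (ecomp (ev X i0) H) /\
    two_iso tau g eps (ecomp (ev X i1) H).

From Stdlib Require Import Classical ProofIrrelevance.
Set Implicit Arguments.
Unset Strict Implicit.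

(* The constant homotopy at [g] evaluates to [g] at both ends, so the given
   2-isomorphism [(sigma,f) => (tau,g)] already serves as the 2-isomorphism at
   time 0, and at time 1 one needs [(tau,g) => (tau,g)], which holds via any
   essential equivalence into the source of [tau] (e.g. the second leg of the
   given 2-isomorphism) and identity natural transformations. *)

Lemma open_const (X : space) (P : Prop) : is_open (fun _ : X => P).
Proof.
  apply (@open_ext X (fun x => exists A : X -> Prop, (P /\ A = fun _ => True) /\ A x)).
  - intro x; split.
    + intros [A [[p _] _]]; exact p.
    + intro p; exists (fun _ => True); auto.
  - apply open_union; intros A [_ ->]; apply open_full.
Qed.

Definition const_path {X : space} (x : X) : path_space X :=
  exist (fun a : I_space -> X => continuous a) (fun _ => x)
        (fun U _ => open_const I_space (U x)).

Lemma continuous_const_path (Y X : space) (h : Y -> X) :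
  continuous h -> @continuous Y (path_space X) (fun y => const_path (h y)).
Proof.
  intro hc; apply continuous_gen; intros b [C [U [_ [oU hb]]]].
  destruct (classic (exists t, C t)) as [[t Ct] | noC].
  - apply (@open_ext Y (fun y => U (h y))); [|exact (hc U oU)].
    intro y; rewrite hb; simpl; split; [auto | intro hU; exact (hU t Ct)].
  - apply (@open_ext Y (fun _ => True)); [|apply open_full].
    intro y; rewrite hb; simpl; split; [intros _ t Ct; exfalso; eauto | auto].
Qed.

Lemma pact_const_path (G : group) (X : gspace G) (k : G) (x : X) :
  pact X k (const_path x) = const_path (act X k x).
Proof. apply subset_eq_compat; reflexivity. Qed.

Definition const_homotopy K (Y : gspace K) G (X : gspace G) (phi : emap Y X) :
  emap Y (path_gspace X) :=
  @EMap K Y G (path_gspace X) (ehom phi) (fun y => const_path (emor phi y)).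

Lemma ev_const_homotopy K (Y : gspace K) G (X : gspace G) (phi : emap Y X) i :
  ecomp (ev X i) (const_homotopy phi) = phi.
Proof. destruct phi; reflexivity. Qed.

Lemma equivariant_const_homotopy K (Y : gspace K) G (X : gspace G) (phi : emap Y X) :
  equivariant phi -> equivariant (const_homotopy phi).
Proof.
  intros [hom [cont eqv]]; split; [exact hom | split].
  - exact (continuous_const_path cont).
  - intros k y; simpl; rewrite eqv; symmetry; apply pact_const_path.
Qed.

Lemma gen_map_const_homotopy K (Y : gspace K) G (X : gspace G) J (Z : gspace J)
  (eps : emap Z Y) (phi : emap Z X) :
  gen_map eps phi -> gen_map eps (const_homotopy phi).
Proof.
  intros [ok [eeps [ephi ess]]].
  split; [exact ok | split; [exact eeps | split; [|exact ess]]].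
  exact (equivariant_const_homotopy ephi).
Qed.

Lemma equivariant_comp K (Y : gspace K) G (X : gspace G) H (Z : gspace H)
  (e2 : emap X Z) (e1 : emap Y X) :
  equivariant e2 -> equivariant e1 -> equivariant (ecomp e2 e1).
Proof.
  intros [hom2 [cont2 eqv2]] [hom1 [cont1 eqv1]]; split; [|split]; simpl.
  - intros a b; rewrite hom1, hom2; reflexivity.
  - exact (continuous_comp cont1 cont2).
  - intros k y; rewrite eqv1, eqv2; reflexivity.
Qed.

Lemma nat_trans_refl K (Y : gspace K) G (X : gspace G) (phi : emap Y X) :
  (forall x, act X gone x = x) -> equivariant phi -> nat_trans phi phi.
Proof.
  intros act1 [_ [cont _]].
  exists (fun y => (gone, emor phi y)); split; [|split].
  - apply continuous_gen; intros b [[U [_ hb]] | [V [oV hb]]].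
    + apply (@open_ext Y (fun _ => U gone)); [intro y; rewrite hb; tauto|].
      apply open_const.
    + apply (@open_ext Y (fun y => V (emor phi y))); [intro y; rewrite hb; tauto|].
      exact (cont V oV).
  - intro y; unfold src, tgt; simpl; auto.
  - intros k y; unfold acomp, arrmap; simpl; rewrite gmul1l, gmul1r; reflexivity.
Qed.

Lemma two_iso_refl_r K (Y : gspace K) G (X : gspace G)
  J (Z : gspace J) J' (Z' : gspace J')
  (eps : emap Z Y) (phi : emap Z X) (eps' : emap Z' Y) (phi' : emap Z' X) :
  gaction_ok Y -> gaction_ok X -> equivariant eps' -> equivariant phi' ->
  two_iso eps phi eps' phi' -> two_iso eps' phi' eps' phi'.
Proof.
  intros [actY1 _] [actX1 _] eeps' ephi'
         [L [W [_ [v [okW [_ [ev [_ [essv _]]]]]]]]].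
  exists L, W, v, v.
  do 5 (split; [assumption|]).
  split; apply nat_trans_refl; auto; apply equivariant_comp; assumption.
Qed.

Theorem mainTheorem10
  (K : group) (Y : gspace K) (G : group) (X : gspace G)
  (K' : group) (Y' : gspace K') (sigma : emap Y' Y) (f : emap Y' X)
  (K'' : group) (Y'' : gspace K'') (tau : emap Y'' Y) (g : emap Y'' X) :
  gaction_ok Y -> gaction_ok X ->
  gen_map sigma f -> gen_map tau g ->
  two_iso sigma f tau g ->
  homotopic sigma f tau g.
Proof.
  intros hY hX _ gmap iso.
  exists K'', Y'', tau, (const_homotopy g).
  rewrite !ev_const_homotopy.
  pose proof gmap as (_ & etau & eg & _).
  split; [exact (gen_map_const_homotopy gmap) | split; [exact iso|]].
  exact (two_iso_refl_r hY hX etau eg iso).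
Qed.
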